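(* Let $p$ be a random partition and let $\mathrm{Sh}^p$ be its $p$-Shapley value, $$\mathrm{Sh}^p_i(w)=\sum_{(T,\tau)\in\mathcal{E}(N\setminus\{i\})}\Big(p_N(\{T\cup\{i\}\}\cup\tau)\,w(T\cup\{i\},\tau)-\frac{t}{n-t}\sum_{B\in\tau\cup\{\emptyset\}}p_N(\{T\}\cup\tau_{+i\leadsto B})\,w(T,\tau_{+i\leadsto B})\Big)$$ for $N\subseteq\mathbf{U}$, $w\in\mathbb{W}(N)$, $i\in N$. Then $\mathrm{Sh}^p$ satisfies monotonicity if and only if $p=p^\star$, i.e., if and only if $\mathrm{Sh}^p=\mathrm{MPW}$.
   Context: $\mathbf{U}$ is a finite set of players; cardinalities of $N,S,T,B$ are $n,s,t,b$. $\Pi(N)$ is the set of partitions of $N$ ($\Pi(\emptyset)=\{\emptyset\}$). A random partition is $p=(p_N)_{N\subseteq\mathbf{U}}$ with $p_N$ a probability distribution on $\Pi(N)$; $p^\star$ is the Ewens distribution $p^\star_N(\pi)=\frac{\prod_{B\in\pi}(b-1)!}{n!}$. $\pi_{+i\leadsto B}=(\pi\setminus\{B\})\cup\{B\cup\{i\}\}$ for $B\in\pi$, $\pi_{+i\leadsto\emptyset}=\pi\cup\{\{i\}\}$. Embedded coalitions $\mathcal{E}(N)=\{(S,\pi):S\subseteq N,\pi\in\Pi(N\setminus S)\}$; a TUX game on $N$ is $w:\mathcal{E}(N)\to\mathbb{R}$ with $w(\emptyset,\pi)=0$; $\mathbb{W}(N)$ their set. A solution $\varphi$ (assigning $\varphi(w)\in\mathbb{R}^N$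 to each $w\in\mathbb{W}(N)$) satisfies monotonicity if for all $N$, $w,z\in\mathbb{W}(N)$ and $i\in N$ with $w(S\cup\{i\},\pi)-w(S,\pi_{+i\leadsto B})\ge z(S\cup\{i\},\pi)-z(S,\pi_{+i\leadsto B})$ for all $(S,\pi)\in\mathcal{E}(N\setminus\{i\})$ and $B\in\pi\cup\{\emptyset\}$, we have $\varphi_i(w)\ge\varphi_i(z)$. The Shapley value of a TU game $v$ is $\mathrm{Sh}_i(v)=\sum_{S\subseteq N\setminus\{i\}}\frac{s!(n-s-1)!}{n!}(v(S\cup\{i\})-v(S))$; the MPW solution is $\mathrm{MPW}(w)=\mathrm{Sh}(\bar v^\star_w)$ with $\bar v^\star_w(S)=\sum_{\pi\in\Pi(N\setminus S)}p^\star_{N\setminus S}(\pi)w(S,\pi)$. *)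

From mathcomp Require Import all_boot all_order all_algebra.
Set Implicit Arguments. Unset Strict Implicit. Unset Printing Implicit Defensive.
Import Order.TTheory GRing.Theory Num.Theory.
Local Open Scope ring_scope.

Section TUX.
Variables (U : finType) (R : realFieldType).

(* A random partition: p N is a probability distribution on Pi(N),
   encoded as a function on {set {set U}} vanishing outside Pi(N).
   mathcomp's [partition P N] = cover P = N, trivIset P, set0 \notin P;
   so Pi(set0) = {set0}. *)
Definition random_partition (p : {set U} -> {set {set U}} -> R) : Prop :=
  forall N : {set U},
    (forall P, partition P N -> 0 <= p N P) /\
    (forall P, ~~ partition P N -> p N P = 0) /\
    \sum_(P | partition P N) p N P = 1.

Definition ewens (N : {set U}) (P : {set {set U}}) : R :=
  if partition P N then
    (\prod_(B in P) ((#|B|.-1)`!)%:R) / ((#|N|)`!)%:R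
  else 0.

Definition add_to (pi : {set {set U}}) (i : U) (B : {set U}) : {set {set U}} :=
  if B == set0 then [set i] |: pi
  else (B :|: [set i]) |: (pi :\ B).

(* TUX games on N: w : embedded coalitions -> R, only values on E(N) matter;
   w(set0, pi) = 0 for pi in Pi(N). *)
Definition is_game (N : {set U}) (w : {set U} -> {set {set U}} -> R) : Prop :=
  forall pi, partition pi N -> w set0 pi = 0.

Definition ShP (p : {set U} -> {set {set U}} -> R) (N : {set U})
    (w : {set U} -> {set {set U}} -> R) (i : U) : R :=
  \sum_(T : {set U} | T \subset N :\ i)
   \sum_(tau : {set {set U}} | partition tau ((N :\ i) :\: T))
    ( p N ((T :|: [set i]) |: tau) * w (T :|: [set i]) tau
      - ((#|T|)%:R / (#|N| - #|T|)%:R) *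
        \sum_(B in set0 |: tau) p N (T |: add_to tau i B) * w T (add_to tau i B)).

Definition monotone
    (phi : {set U} -> ({set U} -> {set {set U}} -> R) -> U -> R) : Prop :=
  forall (N : {set U}) (w z : {set U} -> {set {set U}} -> R) (i : U),
    is_game N w -> is_game N z -> i \in N ->
    (forall (S : {set U}) (pi : {set {set U}}),
        S \subset N :\ i -> partition pi ((N :\ i) :\: S) ->
        forall B, B \in set0 |: pi ->
          z (S :|: [set i]) pi - z S (add_to pi i B)
            <= w (S :|: [set i]) pi - w S (add_to pi i B)) ->
    phi N z i <= phi N w i.

Definition shapley (N : {set U}) (v : {set U} -> R) (i : U) : R :=
  \sum_(S : {set U} | S \subset N :\ i)
    (((#|S|)`! * (#|N| - #|S| - 1)`!)%:R / ((#|N|)`!)%:R)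
      * (v (S :|: [set i]) - v S).

Definition vbar_star (N : {set U}) (w : {set U} -> {set {set U}} -> R)
    (S : {set U}) : R :=
  \sum_(P | partition P (N :\: S)) ewens (N :\: S) P * w S P.

Definition MPW (N : {set U}) (w : {set U} -> {set {set U}} -> R) (i : U) : R :=
  shapley N (vbar_star N w) i.

End TUX.

(* For [p = p*] the Ewens coefficients regroup [ShP p] into the Shapley value of
   the Ewens-averaged TU game, i.e. MPW; its marginal contributions are averages
   of those of [w] with nonnegative weights, so it is monotone.
   Conversely, for [T] nonempty the game worth [1] on [(T u {i}, tau)] and on
   all [(T, tau_{+i~>B})] gives [i] zero marginal contributions, so monotonicity
   (against the null game, both ways) forces its [ShP p]-value to vanish:
     p_N({T u {i}} u tau) = t/(n-t) * sum_B p_N({T} u tau_{+i~>B}).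
   For a partition [Q] of [N \ {i}] this says that putting [i] into the block
   [T] of [Q] has [#|T|] times the probability of putting it alone.  Splitting
   blocks one player at a time relates any two partitions of [N] by the ratio of
   their weights [prod_C (#|C| - 1)!], so [p_N] is proportional to the Ewens
   weight, and normalization gives [p = p*]. *)

From mathcomp Require Import all_boot all_order all_algebra.
From mathcomp Require Import ring.
Set Implicit Arguments. Unset Strict Implicit. Unset Printing Implicit Defensive.
Import Order.TTheory GRing.Theory Num.Theory.
Local Open Scope ring_scope.

Section Partitions.
Variable U : finType.
Implicit Types (M N S T B C : {set U}) (P Q pi tau : {set {set U}}) (i : U).

Lemma subsetD1_notin S N i : S \subset N :\ i -> i \notin S.
Proof. by rewrite subsetD1 => /andP[]. Qed.

Lemma setDD1 N S i : (N :\: S) :\ i = (N :\ i) :\: S.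
Proof. by rewrite !setDDl setUC. Qed.

Lemma setDU1 N S i : N :\: (S :|: [set i]) = (N :\ i) :\: S.
Proof. by rewrite setDDl setUC. Qed.

Lemma partition_setU1D P N S : S \subset N -> S != set0 ->
  partition P (N :\: S) -> partition (S |: P) N.
Proof.
move=> sSN S0 hP; rewrite -[N in partition _ N](setID N S) (setIidPr sSN).
apply: partitionU1 => //.
by rewrite disjoints_subset setDE setCI setCK subsetUr.
Qed.

Lemma notin_block pi M i C : partition pi (M :\ i) -> C \in pi -> i \notin C.
Proof.
move=> hp /(partitionS hp)/subsetP/(_ i) h; apply/negP => /h.
by rewrite !inE eqxx.
Qed.

Lemma notin_target pi M i B :
  partition pi (M :\ i) -> B \in set0 |: pi -> i \notin B.
Proof. by move=> hp /setU1P[->|/(notin_block hp)//]; rewrite inE. Qed.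

Lemma setU1_notin_partition pi M i B :
  partition pi (M :\ i) -> B :|: [set i] \notin pi.
Proof. by move=> hp; apply/negP => /(notin_block hp); rewrite set1Ur. Qed.

Lemma setU1_notin_setD1 pi M i B C :
  partition pi (M :\ i) -> B :|: [set i] \notin pi :\ C.
Proof. by move=> hp; rewrite in_setD1 (negbTE (setU1_notin_partition _ hp)) andbF. Qed.

Lemma setU1iK B i : i \notin B -> (B :|: [set i]) :\ i = B.
Proof. by move=> iB; rewrite setUC setU1K. Qed.

Lemma add_to_partition pi M i B : partition pi (M :\ i) -> i \in M ->
  B \in set0 |: pi -> partition (add_to pi i B) M.
Proof.
move=> hp iM; rewrite /add_to; case: eqP => [-> _|/eqP B0 /setU1P[/eqP|hB] //].
  rewrite -(setD1K iM); apply: partitionU1 => //; last by rewrite disjoints1 setD11.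
  by apply/set0Pn; exists i; rewrite set11.
have sB := subsetP (partitionS hp hB).
have -> : M = (B :|: [set i]) :|: ((M :\ i) :\: B).
  apply/setP => x; rewrite !inE; move: (sB x); rewrite !inE.
  case: (x \in B) => /=; first by move=> /(_ isT)/andP[].
  by case: eqP => [->|] //=; rewrite andbT.
apply: (partitionU1 (partitionD1 hp hB)); first by apply/set0Pn; exists i; exact: set1Ur.
rewrite -setI_eq0; apply/eqP/setP => x; rewrite !inE.
by case: (x \in B); case: (x == i).
Qed.

Lemma pblock_add_to pi M i B : partition pi (M :\ i) -> i \in M ->
  B \in set0 |: pi -> pblock (add_to pi i B) i = B :|: [set i].
Proof.
move=> hp iM hB; apply: def_pblock; last exact: set1Ur.
  exact: partition_trivIset (add_to_partition hp iM hB).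
by rewrite /add_to; case: eqP => [->|]; rewrite !inE ?set0U eqxx.
Qed.

(* Inverse of [add_to]: the block [i] leaves is [pblock P i :\ i], which is
   [set0] when [i] was a singleton. *)
Definition remove_from P i : {set {set U}} :=
  let C := pblock P i in if C :\ i == set0 then P :\ C else (C :\ i) |: (P :\ C).

Lemma add_toK pi M i B : partition pi (M :\ i) -> i \in M ->
  B \in set0 |: pi -> remove_from (add_to pi i B) i = pi.
Proof.
move=> hp iM hB; rewrite /remove_from (pblock_add_to hp iM hB).
rewrite setU1iK ?(notin_target hp hB) //.
case: eqP hB => [B0 _|/eqP B0 /setU1P[/eqP|hB] //].
  by rewrite /add_to B0 eqxx set0U setU1K // -[[set i]]set0U (setU1_notin_partition _ hp).
by rewrite /add_to (negbTE B0) setU1K ?setD1K // (setU1_notin_setD1 _ _ hp).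
Qed.

Lemma pblock_mem_partition P M i : partition P M -> i \in M ->
  pblock P i \in P /\ i \in pblock P i.
Proof.
by move=> hP iM; rewrite mem_pblock pblock_mem (cover_partition hP).
Qed.

Lemma remove_from_partition P M i : partition P M -> i \in M ->
  partition (remove_from P i) (M :\ i).
Proof.
move=> hP iM; have [CP iC] := pblock_mem_partition hP iM.
have h1 := partitionD1 hP CP; have sC := subsetP (partitionS hP CP).
rewrite /remove_from; case: eqP => [C0|/eqP C0].
  by move: h1; rewrite -(setD1K iC) C0 setU0.
have -> : M :\ i = (pblock P i :\ i) :|: (M :\: pblock P i).
  apply/setP => x; rewrite !inE; move: (sC x).
  case hx: (x \in pblock P i) => /= h; first by rewrite h // andbT orbF.
  by case: eqP => [e|] /=; [move: hx; rewrite e iC | ].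
apply: (partitionU1 h1 C0).
rewrite -setI_eq0; apply/eqP/setP => x; rewrite !inE.
by case: (x \in pblock P i); rewrite ?andbF.
Qed.

Lemma pblockD1_target P M i : partition P M -> i \in M ->
  pblock P i :\ i \in set0 |: remove_from P i.
Proof.
by move=> hP iM; rewrite /remove_from; case: eqP => [->|_]; rewrite !inE eqxx ?orbT.
Qed.

Lemma remove_fromK P M i : partition P M -> i \in M ->
  add_to (remove_from P i) i (pblock P i :\ i) = P.
Proof.
move=> hP iM; have [CP iC] := pblock_mem_partition hP iM.
rewrite /remove_from /add_to; case: eqP => [C0|/eqP C0].
  by rewrite -[[set i]]setU0 -C0 setD1K // setD1K.
rewrite setU1K.
  by rewrite [_ :|: [set i]]setUC !setD1K.
apply/negP => /setD1P [ne hin].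
have := trivIsetP (partition_trivIset hP) _ _ hin CP ne.
case/set0Pn: C0 => x hx /disjointFr /(_ hx).
by move: hx; rewrite !inE => /andP[_ ->].
Qed.

(* Partitions of [M] correspond to a partition of [M :\ i] together with the
   block receiving [i] ([set0] standing for a new singleton block). *)
Lemma big_add_to (V : nmodType) M i (F : {set {set U}} -> V) : i \in M ->
  \sum_(P | partition P M) F P =
  \sum_(pi | partition pi (M :\ i)) \sum_(B in set0 |: pi) F (add_to pi i B).
Proof.
move=> iM; rewrite pair_big_dep /=.
rewrite (reindex_onto (fun q => add_to q.1 i q.2)
                      (fun P => (remove_from P i, pblock P i :\ i))) /=; last first.
  by move=> P hP; rewrite (remove_fromK hP iM).
apply: eq_bigl => -[pi B] /=; apply/andP/andP => [[hP /eqP [e1 e2]]|[hp hB]].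
  split; first by rewrite -e1; apply: remove_from_partition hP iM.
  by rewrite -[B in B \in _]e2 -[pi in _ |: pi]e1; apply: pblockD1_target hP iM.
split; first exact: add_to_partition.
rewrite (add_toK hp iM hB) (pblock_add_to hp iM hB).
by rewrite setU1iK ?(notin_target hp hB).
Qed.

Lemma add_to_setD1 Q i T B : T \in Q -> B \in set0 |: (Q :\ T) ->
  T |: add_to (Q :\ T) i B = add_to Q i B.
Proof.
move=> TQ; rewrite /add_to; case: eqP => [_ _|/eqP B0 /setU1P[/eqP|] //].
  by rewrite setUCA setD1K.
move=> /setD1P[BT BQ]; rewrite setUCA; congr (_ |: _).
by rewrite setDDl [[set T] :|: [set B]]setUC -setDDl setD1K // !inE eq_sym BT.
Qed.

Lemma big_add_to_setD1 (V : nmodType) Q i T (F : {set {set U}} -> V) :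
  T \in Q -> T != set0 ->
  \sum_(B in set0 |: Q) F (add_to Q i B) =
  F (add_to Q i T) + \sum_(B in set0 |: (Q :\ T)) F (T |: add_to (Q :\ T) i B).
Proof.
move=> TQ T0; rewrite (bigD1 T) ?setU1r //=; congr (_ + _).
rewrite (eq_bigl (mem (set0 |: (Q :\ T)))) => [|B].
  by apply: eq_bigr => B hB; rewrite add_to_setD1.
rewrite !inE; case: (eqVneq B T) => [->|_]; first by rewrite (negbTE T0) andbF.
by rewrite andbT.
Qed.

Definition ewens_weight P : nat := \prod_(C in P) (#|C|.-1)`!.

Lemma ewens_weightU1 B P : B \notin P ->
  ewens_weight (B |: P) = ((#|B|.-1)`! * ewens_weight P)%N.
Proof. by move=> BP; rewrite /ewens_weight big_setU1. Qed.

Lemma fact_maxn1 n : n`! = (maxn n 1 * n.-1`!)%N.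
Proof. by case: n. Qed.

Lemma ewens_weight_add_to pi M i B : partition pi (M :\ i) -> i \in M ->
  B \in set0 |: pi -> ewens_weight (add_to pi i B) = (maxn #|B| 1 * ewens_weight pi)%N.
Proof.
move=> hp iM hB; have iB := notin_target hp hB.
rewrite /add_to; case: eqP hB => [-> _|/eqP B0 /setU1P[/eqP|hB] //].
  rewrite ewens_weightU1 ?cards1 ?cards0 ?mul1n //.
  by rewrite -[[set i]]set0U (setU1_notin_partition _ hp).
rewrite ewens_weightU1 ?(setU1_notin_setD1 _ _ hp) //.
rewrite -[in ewens_weight pi](setD1K hB) ewens_weightU1 ?setD11 //.
by rewrite setUC cardsU1 iB add1n /= fact_maxn1 mulnA.
Qed.

Lemma sum_maxn_card1 pi M i : partition pi (M :\ i) -> i \in M ->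
  (\sum_(B in set0 |: pi) maxn #|B| 1)%N = #|M|.
Proof.
move=> hp iM; rewrite big_setU1 ?(partition0 hp) //= cards0.
rewrite (eq_bigr (fun B => #|B|)); last first.
  by move=> B /(partition_neq0 hp); rewrite -card_gt0 => /maxn_idPl.
by rewrite -(card_partition hp) [in RHS](cardsD1 i) iM.
Qed.

Lemma sum_ewens_weight M : (\sum_(P | partition P M) ewens_weight P)%N = #|M|`!.
Proof.
have [n hM] : exists n, #|M| = n by eexists.
elim: n M hM => [|n IH] M hM.
  move/eqP: hM; rewrite cards_eq0 => /eqP ->.
  rewrite (big_pred1 set0) ?cards0 /ewens_weight ?big_set0 // => P.
  exact: partition_set0.
have [i iM] : exists i, i \in M by apply/set0Pn; rewrite -card_gt0 hM.
have hMi : #|M :\ i| = n by move: hM; rewrite (cardsD1 i) iM add1n => -[].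
rewrite (big_add_to _ iM) hM factS -hMi -(IH _ hMi) big_distrr /=; apply: eq_bigr => pi hp.
rewrite (eq_bigr (fun B => maxn #|B| 1 * ewens_weight pi)%N); last first.
  by move=> B; exact: ewens_weight_add_to hp iM.
by rewrite -big_distrl /= (sum_maxn_card1 hp iM) hM hMi.
Qed.

Definition excess P : nat := \sum_(C in P) #|C|.-1.

Lemma excess_add_to pi M i B : partition pi (M :\ i) -> i \in M ->
  B \in set0 |: pi -> excess (add_to pi i B) = ((B != set0) + excess pi)%N.
Proof.
move=> hp iM hB; have iB := notin_target hp hB.
rewrite /add_to /excess; case: eqP hB => [-> _|/eqP B0 /setU1P[/eqP|hB] //].
  by rewrite big_setU1 ?cards1 // -[[set i]]set0U (setU1_notin_partition _ hp).
rewrite big_setU1 ?(setU1_notin_setD1 _ _ hp) //= -[in RHS](setD1K hB).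
by rewrite big_setU1 ?setD11 //= setUC cardsU1 iB /= add1n -addSn prednK ?card_gt0.
Qed.

Lemma excess_eq0 P : (excess P == 0)%N = [forall (C | C \in P), #|C| <= 1]%N.
Proof.
rewrite /excess sum_nat_eq0; apply: eq_forallb => C.
by case: (C \in P) => //=; case: #|C| => [|[]].
Qed.

Lemma card_le1_set1 C x : x \in C -> (#|C| <= 1)%N -> C = [set x].
Proof. by move=> Cx /card_le1P/(_ x Cx) eCx; apply/setP => y; rewrite eCx inE. Qed.

Lemma excess_eq0_uniq P P' N : partition P N -> partition P' N ->
  excess P = 0%N -> excess P' = 0%N -> P = P'.
Proof.
suff sub Q Q' : partition Q N -> partition Q' N ->
    excess Q = 0%N -> excess Q' = 0%N -> Q \subset Q'.
  by move=> hP hP' e e'; apply/eqP; rewrite eqEsubset !sub.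
move=> hQ hQ' /eqP + /eqP; rewrite !excess_eq0 => /forall_inP le1 /forall_inP le1'.
apply/subsetP => C CQ; have /set0Pn[x Cx] := partition_neq0 hQ CQ.
have xN : x \in cover Q' by rewrite (cover_partition hQ') (subsetP (partitionS hQ CQ)).
have Q'x := pblock_mem xN; have xQ'x : x \in pblock Q' x by rewrite mem_pblock.
by rewrite (card_le1_set1 Cx (le1 C CQ)) -(card_le1_set1 xQ'x (le1' _ Q'x)).
Qed.

End Partitions.

Section Games.
Variables (U : finType) (R : realFieldType).
Implicit Types (M N S T B C : {set U}) (P Q pi tau : {set {set U}}) (i : U).
Implicit Types (p : {set U} -> {set {set U}} -> R) (w z : {set U} -> {set {set U}} -> R).

Lemma natr_fact_neq0 n : n`!%:R != 0 :> R.
Proof. by rewrite pnatr_eq0 -lt0n fact_gt0. Qed.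

Lemma ewensE N P : partition P N ->
  ewens R N P = (ewens_weight P)%:R / #|N|`!%:R.
Proof. by move=> hP; rewrite /ewens hP natr_prod. Qed.

Lemma ewens_ge0 N P : 0 <= ewens R N P.
Proof.
rewrite /ewens; case: ifP => // _.
by apply: divr_ge0 => //; apply: prodr_ge0.
Qed.

Lemma sum_ewens_add_to pi M i : partition pi (M :\ i) -> i \in M ->
  \sum_(B in set0 |: pi) ewens R M (add_to pi i B) = ewens R (M :\ i) pi.
Proof.
move=> hp iM.
rewrite (eq_bigr (fun B => (maxn #|B| 1)%:R * ((ewens_weight pi)%:R / #|M|`!%:R))).
  rewrite -mulr_suml -natr_sum (sum_maxn_card1 hp iM) (ewensE hp).
  rewrite (cardsD1 i M) iM add1n factS natrM.
  by rewrite invfM mulrCA mulVKf // pnatr_eq0.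
move=> B hB; rewrite (ewensE (add_to_partition hp iM hB)).
by rewrite (ewens_weight_add_to hp iM hB) natrM mulrA.
Qed.

Lemma vbar_star_marginal N w S i :
  i \in N -> i \notin S ->
  vbar_star N w (S :|: [set i]) - vbar_star N w S =
  \sum_(pi | partition pi ((N :\ i) :\: S)) \sum_(B in set0 |: pi)
     ewens R (N :\: S) (add_to pi i B) * (w (S :|: [set i]) pi - w S (add_to pi i B)).
Proof.
move=> iN iS; have iM : i \in N :\: S by rewrite inE iS iN.
rewrite /vbar_star (big_add_to _ iM) setDD1 setDU1 -sumrB.
apply: eq_bigr => pi hp; rewrite -setDD1 in hp.
rewrite -setDD1 -(sum_ewens_add_to hp iM) mulr_suml -sumrB.
by apply: eq_bigr => B _; rewrite mulrBr.
Qed.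

Lemma MPW_monotone : monotone (@MPW U R).
Proof.
move=> N w z i _ _ iN le_wz; apply: ler_sum => S hS.
have iS := subsetD1_notin hS.
apply: ler_wpM2l; first exact: divr_ge0.
rewrite !vbar_star_marginal //; apply: ler_sum => pi hp; apply: ler_sum => B hB.
by apply: ler_wpM2l; [exact: ewens_ge0 | exact: le_wz].
Qed.

Lemma ewens_setU1 P N S : S \subset N -> S != set0 -> partition P (N :\: S) ->
  ewens R N (S |: P) =
  ((#|S|.-1)`! * (#|N| - #|S|)`!)%:R / #|N|`!%:R * ewens R (N :\: S) P.
Proof.
move=> sSN S0 hP; have hSP := partition_setU1D sSN S0 hP.
have SP : S \notin P.
  apply: contraNN S0 => /(partitionS hP); rewrite -subset0 => sSD.
  by apply/subsetP => x xS; have := subsetP sSD x xS; rewrite inE xS.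
rewrite (ewensE hSP) (ewensE hP) ewens_weightU1 // cardsD (setIidPr sSN).
have h1 := natr_fact_neq0 (#|N| - #|S|); have h2 := natr_fact_neq0 #|N|.
by rewrite !natrM; field; rewrite h1 h2.
Qed.

Lemma ewens_setU1_player tau N T i : i \in N -> T \subset N :\ i ->
  partition tau ((N :\ i) :\: T) ->
  ewens R N ((T :|: [set i]) |: tau) =
  (#|T|`! * (#|N| - #|T| - 1)`!)%:R / #|N|`!%:R * ewens R ((N :\ i) :\: T) tau.
Proof.
move=> iN; rewrite subsetD1 => /andP[sTN iT] htau.
have sTiN : T :|: [set i] \subset N by rewrite subUset sTN sub1set.
have Ti0 : T :|: [set i] != set0 by apply/set0Pn; exists i; exact: set1Ur.
rewrite ewens_setU1 ?setDU1 // setUC cardsU1 (negbTE iT) add1n.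
by rewrite subnS subn1.
Qed.

Lemma ewens_setU1_ratio P N T : T \subset N -> T != set0 -> T != N ->
  partition P (N :\: T) ->
  #|T|%:R / (#|N| - #|T|)%:R * ewens R N (T |: P) =
  (#|T|`! * (#|N| - #|T| - 1)`!)%:R / #|N|`!%:R * ewens R (N :\: T) P.
Proof.
move=> sTN T0 TN hP; rewrite ewens_setU1 // mulrA; congr (_ * _).
have : (0 < #|T|)%N by rewrite card_gt0.
have : (0 < #|N| - #|T|)%N.
  by rewrite subn_gt0 proper_card // properEneq TN.
case: (#|N| - #|T|)%N => // k _; case: #|T| => // t _.
rewrite /= subn1 /= !factS !natrM.
by field; rewrite natr_fact_neq0 addrC natr1 pnatr_eq0.
Qed.

Lemma ShP_ewens N w i :
  is_game N w -> i \in N -> ShP (ewens R) N w i = MPW N w i.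
Proof.
move=> gw iN; apply: eq_bigr => T hT; rewrite sumrB mulrBr; congr (_ - _).
  rewrite /vbar_star setDU1 mulr_sumr; apply: eq_bigr => tau htau.
  by rewrite ewens_setU1_player // mulrA.
have [-> | T0] := eqVneq T set0.
  rewrite /vbar_star big1 => [|tau _]; last by rewrite cards0 !mul0r.
  by rewrite big1 ?mulr0 // => P hP; rewrite gw ?mulr0 // -(setD0 N).
move: hT; rewrite subsetD1 => /andP[sTN iT].
have iM : i \in N :\: T by rewrite inE iT iN.
have TN : T != N by apply: contraNneq iT => ->.
rewrite /vbar_star (big_add_to _ iM) setDD1 mulr_sumr; apply: eq_bigr => tau htau.
rewrite -setDD1 in htau; rewrite !mulr_sumr; apply: eq_bigr => B hB.
by rewrite mulrA ewens_setU1_ratio ?mulrA // add_to_partition.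
Qed.

Lemma eq_ShP p q N w i : (forall N P, p N P = q N P) -> ShP p N w i = ShP q N w i.
Proof.
move=> pq; apply: eq_bigr => T _; apply: eq_bigr => tau _; rewrite pq.
by congr (_ - _ * _); apply: eq_bigr => B _; rewrite pq.
Qed.

Lemma monotone_marginal_eq (phi : {set U} -> ({set U} -> {set {set U}} -> R) -> U -> R)
    N w z i :
  monotone phi -> is_game N w -> is_game N z -> i \in N ->
  (forall S pi, S \subset N :\ i -> partition pi ((N :\ i) :\: S) ->
     forall B, B \in set0 |: pi ->
       w (S :|: [set i]) pi - w S (add_to pi i B) =
       z (S :|: [set i]) pi - z S (add_to pi i B)) ->
  phi N w i = phi N z i.
Proof.
move=> mono gw gz iN eq_wz; apply/eqP; rewrite eq_le.
by rewrite !mono // => S pi hS hp B hB; rewrite eq_wz.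
Qed.

(* Worth [1] on [(T :|: [set i], tau)] and on all the [(T, add_to tau i B)] it
   splits into when [i] leaves, so that [i] has no marginal contribution. *)
Definition probe_game T tau i S pi : R :=
  ((S == T :|: [set i]) && (pi == tau))%:R + ((S == T) && (remove_from pi i == tau))%:R.

Lemma probe_game_is_game N T tau i : T != set0 -> is_game N (probe_game T tau i).
Proof.
move=> T0 pi _; rewrite /probe_game [set0 == T]eq_sym (negbTE T0) addr0.
by rewrite eq_sym; case: eqP => // /setP/(_ i); rewrite set1Ur inE.
Qed.

Lemma probe_game_setU1 S T tau i pi : i \notin S -> i \notin T ->
  probe_game T tau i (S :|: [set i]) pi = ((S == T) && (pi == tau))%:R.
Proof.
move=> iS iT; rewrite /probe_game.
have -> : (S :|: [set i] == T) = false by apply: contraNF iT => /eqP <-; exact: set1Ur.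
rewrite addr0; congr ((_ && _)%:R); apply/eqP/eqP => [e|-> //].
by rewrite -(setU1iK iS) e setU1iK.
Qed.

Lemma probe_game_add_to N S T tau i pi B : i \in N -> S \subset N :\ i ->
  partition pi ((N :\ i) :\: S) -> B \in set0 |: pi ->
  probe_game T tau i S (add_to pi i B) = ((S == T) && (pi == tau))%:R.
Proof.
move=> iN /subsetD1_notin iS hp hB.
have iM : i \in N :\: S by rewrite inE iS iN.
rewrite -setDD1 in hp; rewrite /probe_game (add_toK hp iM hB).
have -> : (S == T :|: [set i]) = false by apply: contraNF iS => /eqP ->; exact: set1Ur.
by rewrite add0r.
Qed.

Lemma big_indicator2 (I J : finType) (P : pred I) (Q : I -> pred J) a b
    (F : I -> J -> R) : P a -> Q a b ->
  \sum_(x | P x) \sum_(y | Q x y) ((x == a) && (y == b))%:R * F x y = F a b.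
Proof.
move=> Pa Qab; rewrite (bigD1 a) //= (bigD1 b) //= !eqxx mul1r.
rewrite big1 => [|y /andP[_ /negbTE->]]; last by rewrite mul0r.
rewrite addr0 big1 ?addr0 // => x /andP[_ /negbTE ne].
by apply: big1 => y _; rewrite ne mul0r.
Qed.

Lemma ShP_probe_game p N T tau i : i \in N -> T \subset N :\ i ->
  partition tau ((N :\ i) :\: T) ->
  ShP p N (probe_game T tau i) i =
  p N ((T :|: [set i]) |: tau) -
  #|T|%:R / (#|N| - #|T|)%:R * \sum_(B in set0 |: tau) p N (T |: add_to tau i B).
Proof.
move=> iN hT htau.
set F := fun S pi => p N ((S :|: [set i]) |: pi) -
  #|S|%:R / (#|N| - #|S|)%:R * \sum_(B in set0 |: pi) p N (S |: add_to pi i B).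
rewrite -[RHS]/(F T tau) -(@big_indicator2 _ _ (fun S => S \subset N :\ i)
  (fun S pi => partition pi ((N :\ i) :\: S)) T tau F) //.
apply: eq_bigr => T' hT'; apply: eq_bigr => tau' htau'.
rewrite probe_game_setU1 ?(subsetD1_notin hT) ?(subsetD1_notin hT') //.
under eq_bigr => B hB do rewrite (probe_game_add_to _ _ iN hT' htau' hB).
by rewrite -big_distrl /= /F; ring.
Qed.

Lemma ShP_zero p N i : ShP p N (fun _ _ => 0) i = 0.
Proof.
rewrite /ShP big1 // => T _; rewrite big1 // => tau _.
by rewrite mulr0 big1 ?mulr0 ?subrr // => B _; rewrite mulr0.
Qed.

End Games.

Section MonotoneShP.
Variables (U : finType) (R : realFieldType) (p : {set U} -> {set {set U}} -> R).
Hypothesis mono : monotone (ShP p).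
Implicit Types (N T B C : {set U}) (P Q tau : {set {set U}}) (i : U).

Lemma monotone_ShP_balance N T tau i : i \in N -> T \subset N :\ i -> T != set0 ->
  partition tau ((N :\ i) :\: T) ->
  p N ((T :|: [set i]) |: tau) =
  #|T|%:R / (#|N| - #|T|)%:R * \sum_(B in set0 |: tau) p N (T |: add_to tau i B).
Proof.
move=> iN hT T0 htau; apply/subr0_eq; rewrite -(ShP_probe_game p iN hT htau).
rewrite -(ShP_zero p N i); apply: monotone_marginal_eq => //.
  exact: probe_game_is_game.
move=> S pi hS hp B hB; rewrite subrr.
by rewrite probe_game_setU1 ?(subsetD1_notin hS) ?(subsetD1_notin hT) //
  (probe_game_add_to R T tau iN hS hp hB) subrr.
Qed.

Lemma monotone_ShP_add_to_block N Q i T : i \in N -> partition Q (N :\ i) -> T \in Q ->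
  p N (add_to Q i T) * #|N|%:R = #|T|%:R * \sum_(B in set0 |: Q) p N (add_to Q i B).
Proof.
move=> iN hQ TQ; have T0 := partition_neq0 hQ TQ; have sTN := partitionS hQ TQ.
have := monotone_ShP_balance iN sTN T0 (partitionD1 hQ TQ).
rewrite (big_add_to_setD1 _ _ TQ T0).
have -> : (T :|: [set i]) |: (Q :\ T) = add_to Q i T by rewrite /add_to (negbTE T0).
move: (\sum_(B in _) _) => S ->.
have lt_TN : (#|T| < #|N|)%N.
  by rewrite (cardsD1 i N) iN add1n ltnS subset_leq_card.
have nT0 : (#|N| - #|T|)%:R != 0 :> R by rewrite pnatr_eq0 subn_eq0 -ltnNge.
have -> : #|N|%:R = (#|N| - #|T|)%:R + #|T|%:R :> R.
  by rewrite -natrD subnK // ltnW.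
move: (_ / _) (divfK nT0 #|T|%:R) => c ctn.
by rewrite mulrDr -ctn; ring.
Qed.

Lemma monotone_ShP_add_to N Q i T : i \in N -> partition Q (N :\ i) -> T \in Q ->
  p N (add_to Q i T) = #|T|%:R * p N (add_to Q i set0).
Proof.
move=> iN hQ TQ; have n0 : #|N|%:R != 0 :> R by rewrite pnatr_eq0 (cardsD1 i) iN.
apply: (mulIf n0); rewrite monotone_ShP_add_to_block // -mulrA; congr (_ * _).
set F := \sum_(B in _) _.
(* sum the block identity over the blocks of [Q] *)
have : F * #|N|%:R = p N (add_to Q i set0) * #|N|%:R + #|N :\ i|%:R * F.
  rewrite {1}/F big_setU1 ?(partition0 hQ) //= mulrDl mulr_suml; congr (_ + _).
  under eq_bigr => B hB do rewrite monotone_ShP_add_to_block //.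
  by rewrite -mulr_suml -natr_sum -(card_partition hQ).
rewrite [#|N|](cardsD1 i) iN natrD -/F.
clearbody F; move: (p N _) #|N :\ i|%:R => p0 m hF.
by rewrite -[p0 * _](addrK (m * F)) -hF /= mulr1n mulrDr mulr1 [m * F]mulrC addrK.
Qed.

(* [P'] moves some [i] out of a block [C] with [#|C| >= 2] into a singleton,
   and [k = #|C| - 1]. *)
Lemma monotone_ShP_split N P : partition P N -> (0 < excess P)%N ->
  exists P' k, [/\ partition P' N, (excess P' < excess P)%N,
     p N P = k%:R * p N P' & ewens_weight P = (k * ewens_weight P')%N].
Proof.
move=> hP; rewrite lt0n excess_eq0 => /forall_inPn[C CP]; rewrite -ltnNge => hC.
have [i iC] : exists i, i \in C by apply/set0Pn; rewrite -card_gt0 ltnW.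
have iN := subsetP (partitionS hP CP) i iC.
have hQ := remove_from_partition hP iN; set Q := remove_from P i in hQ *.
have := pblockD1_target hP iN; have := remove_fromK hP iN.
rewrite (def_pblock (partition_trivIset hP) CP iC) => eP hT.
have T_gt0 : (0 < #|C :\ i|)%N by move: hC; rewrite (cardsD1 i) iC.
have TQ : C :\ i \in Q by move: hT; rewrite in_setU1 -cards_eq0 eqn0Ngt T_gt0.
have Q0 : set0 \in set0 |: Q := setU11 _ _.
exists (add_to Q i set0), #|C :\ i|; split.
- exact: add_to_partition hQ iN Q0.
- by rewrite -eP !(excess_add_to hQ iN) // eqxx -cards_eq0 -lt0n T_gt0.
- by rewrite -eP (monotone_ShP_add_to iN hQ TQ).
- rewrite -eP !(ewens_weight_add_to hQ iN) // cards0 mul1n.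
  by rewrite (maxn_idPl T_gt0).
Qed.

Lemma monotone_ShP_ratio N P P' : partition P N -> partition P' N ->
  p N P * (ewens_weight P')%:R = p N P' * (ewens_weight P)%:R.
Proof.
have [n] : exists n, (excess P + excess P' <= n)%N by exists (excess P + excess P')%N.
elim: n P P' => [|n IH] P P'.
  rewrite leqn0 addn_eq0 => /andP[/eqP e /eqP e'] hP hP'.
  by rewrite (excess_eq0_uniq hP hP' e e').
wlog P_gt0 : P P' / (0 < excess P)%N.
  move=> gen le hP hP'; case: (posnP (excess P)) => [e|]; last by move=> P_gt0; apply: gen.
  case: (posnP (excess P')) => [e'|P'_gt0].
    by rewrite (excess_eq0_uniq hP hP' e e').
  by symmetry; apply: (gen P' P) => //; rewrite addnC.
move=> le hP hP'; have [P'' [k [hP'' lt -> ->]]] := monotone_ShP_split hP P_gt0.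
have le' : (excess P'' + excess P' <= n)%N by rewrite -ltnS (leq_trans _ le) // ltn_add2r.
by rewrite natrM -mulrA IH // mulrCA.
Qed.

Lemma monotone_ShP_ewens : random_partition p -> forall N P, p N P = ewens R N P.
Proof.
move=> rp N P; have [_ [p0 p1]] := rp N.
have [hP|hP] := boolP (partition P N); last by rewrite p0 // /ewens (negbTE hP).
rewrite (ewensE R hP); apply: (canRL (mulfK (natr_fact_neq0 R #|N|))).
rewrite -sum_ewens_weight natr_sum mulr_sumr.
rewrite (eq_bigr _ (fun P' hP' => monotone_ShP_ratio hP hP')).
by rewrite -mulr_suml p1 mul1r.
Qed.

End MonotoneShP.

Theorem corollary3 (U : finType) (R : realFieldType)
    (p : {set U} -> {set {set U}} -> R) :
  random_partition p ->
  (monotone (ShP p) <-> (forall N P, p N P = ewens R N P)) /\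
  (monotone (ShP p) <->
     (forall (N : {set U}) (w : {set U} -> {set {set U}} -> R),
        is_game N w -> forall i, i \in N -> ShP p N w i = MPW N w i)).
Proof.
move=> rp.
have ShP_MPW : (forall N P, p N P = ewens R N P) ->
    forall N w, is_game N w -> forall i, i \in N -> ShP p N w i = MPW N w i.
  by move=> pE N w gw i iN; rewrite -ShP_ewens // (eq_ShP _ _ _ pE).
have ShP_MPW_monotone : (forall N w, is_game N w -> forall i, i \in N ->
    ShP p N w i = MPW N w i) -> monotone (ShP p).
  by move=> E N w z i gw gz iN le_wz; rewrite !E //; apply: MPW_monotone.
split; split => [mono | H].
- exact: monotone_ShP_ewens.
- exact: ShP_MPW_monotone (ShP_MPW H).
- exact: ShP_MPW (monotone_ShP_ewens mono rp).
- exact: ShP_MPW_monotone.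
Qed.
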